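(* Let $\rho_{AB}\in M_2(\mathbb{C})\otimes M_d(\mathbb{C})$ be a bipartite state, let $\{P_a\}_{a=0}^1$ be a nontrivial projective measurement on subsystem $A$ (i.e. $P_0,P_1$ are rank-one orthogonal projections on $\mathbb{C}^2$ with $P_0+P_1=\mathbb{1}$), and set $\rho_a=\mathrm{Tr}_A\big((P_a\otimes\mathbb{1})\rho_{AB}\big)$. Then: (i) if $\mathrm{rank}(\rho_0)=\mathrm{rank}(\rho_1)=1$, then $\mathrm{rank}(\rho_{AB})\ne3$; (ii) if $d\ge3$, $\mathrm{rank}(\rho_{AB})=3$ and $\mathrm{rank}(\rho_0)=0$, then $\mathrm{rank}(\rho_1)=3$; (iii) if $d=2$ and $\mathrm{rank}(\rho_{AB})=3$, then neither $\rho_0$ nor $\rho_1$ has rank zero. *)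

(* Complex numbers: an arbitrary numClosedFieldType C
   (the complex numbers are one; algC is another). *)
From HB Require Import structures.
From mathcomp Require Import all_boot all_order all_algebra.
From mathcomp Require Export mxtens.
Set Implicit Arguments. Unset Strict Implicit. Unset Printing Implicit Defensive.
Import Order.TTheory GRing.Theory Num.Theory.
Local Open Scope ring_scope.

Definition adjmx (C : numClosedFieldType) m n (A : 'M[C]_(m, n)) : 'M[C]_(n, m) :=
  (map_mx Num.conj A)^T.

Definition hermitian (C : numClosedFieldType) n (A : 'M[C]_n) : Prop :=
  adjmx A = A.

Definition psdmx (C : numClosedFieldType) n (A : 'M[C]_n) : Prop :=
  hermitian A /\ forall v : 'rV[C]_n, 0 <= (v *m A *m adjmx v) 0 0.

Definition is_state (C : numClosedFieldType) n (A : 'M[C]_n) : Prop :=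
  psdmx A /\ \tr A = 1.

Definition orth_proj (C : numClosedFieldType) n (P : 'M[C]_n) : Prop :=
  hermitian P /\ P *m P = P.

(* partial trace over the first tensor factor of C^m (x) C^d,
   with the Kronecker index convention of mxtens (A *t B) *)
Definition ptraceA (C : numClosedFieldType) m d (M : 'M[C]_(m * d)) : 'M[C]_d :=
  \matrix_(k, l) \sum_(i < m) M (mxtens_index (i, k)) (mxtens_index (i, l)).

Definition cond_state (C : numClosedFieldType) d (P : 'M[C]_2) (rho : 'M[C]_(2 * d))
  : 'M[C]_d := ptraceA ((P *t (1%:M : 'M[C]_d)) *m rho).

From Pilot Require Import Defs.
From HB Require Import structures.
From mathcomp Require Import all_boot all_order all_algebra.
From mathcomp Require Import mxtens.
From mathcomp Require Import ring zify.
Import Order.TTheory GRing.Theory Num.Theory.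
Local Open Scope ring_scope.
Set Implicit Arguments. Unset Strict Implicit. Unset Printing Implicit Defensive.

(* Write the rank-one projections as P_a = x_a^* x_a and put F_a = x_a (x) 1.
   Cyclicity of the partial trace gives rho_a = F_a rho F_a^*, whose rank is
   that of F_a rho because rho >= 0.  Since F_0^* F_0 + F_1^* F_1 = 1,
   rank rho <= rank rho_0 + rank rho_1, while rank rho_a <= min (d, rank rho);
   the three claims follow by arithmetic. *)

Lemma mxrank1_factor (F : fieldType) m n (A : 'M[F]_(m, n)) : \rank A = 1%N ->
  exists (u : 'cV[F]_m) (v : 'rV[F]_n), A = u *m v.
Proof.
move=> rkA; have /mulmxKpV defA : (A <= row_base A)%MS by rewrite eq_row_base.
move: (A *m pinvmx _) defA => u; move: (row_base A) u; rewrite rkA => v u defA.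
by exists u, v.
Qed.

Lemma mxrank_castmx (F : fieldType) m n m' n' (e : (m = m') * (n = n'))
    (A : 'M[F]_(m, n)) :
  \rank (castmx e A) = \rank A.
Proof. by case: e => e1 e2; case: m' / e1; case: n' / e2; rewrite castmx_id. Qed.

Section Adjoint.
Variable C : numClosedFieldType.

Lemma adjmxE m n (A : 'M[C]_(m, n)) i j : adjmx A i j = (A j i)^*.
Proof. by rewrite !mxE. Qed.

Lemma adjmxK m n (A : 'M[C]_(m, n)) : adjmx (adjmx A) = A.
Proof. by apply/matrixP => i j; rewrite !mxE conjCK. Qed.

Lemma adjmxM m n p (A : 'M[C]_(m, n)) (B : 'M[C]_(n, p)) :
  adjmx (A *m B) = adjmx B *m adjmx A.
Proof. by rewrite /adjmx map_mxM trmx_mul. Qed.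

Lemma adjmxZ m n a (A : 'M[C]_(m, n)) : adjmx (a *: A) = a^* *: adjmx A.
Proof. by apply/matrixP => i j; rewrite !mxE rmorphM. Qed.

Lemma adjmx1 n : adjmx (1%:M : 'M[C]_n) = 1%:M.
Proof. by rewrite /adjmx map_mx1 trmx1. Qed.

Lemma adjmx_tens m n p q (A : 'M[C]_(m, n)) (B : 'M[C]_(p, q)) :
  adjmx (A *t B) = adjmx A *t adjmx B.
Proof. by rewrite /adjmx map_mxT trmx_tens. Qed.

Lemma adjmx_form n (M : 'M[C]_n) (u v : 'rV[C]_n) :
  (u *m M *m adjmx v) 0 0 = form Num.conj M u v.
Proof. by rewrite /form /adjmx map_trmx. Qed.

Lemma hermitian_formC n (M : 'M[C]_n) (u w : 'rV[C]_n) : Defs.hermitian M ->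
  (w *m M *m adjmx u) 0 0 = ((u *m M *m adjmx w) 0 0)^*.
Proof. by move=> hermM; rewrite -[RHS]adjmxE !adjmxM adjmxK hermM mulmxA. Qed.

End Adjoint.

Section PositiveSemidefinite.
Variable C : numClosedFieldType.

Lemma psdmx_form_eq0 n (M : 'M[C]_n) (f : 'rV[C]_n) : psdmx M ->
  (f *m M *m adjmx f) 0 0 = 0 -> f *m M = 0.
Proof.
move=> [hermM psdM] qf0.
suff Mf0 : M *m adjmx f = 0.
  by rewrite -[f *m M]adjmxK adjmxM hermM Mf0; apply/matrixP => i j; rewrite !mxE conjC0.
apply/matrixP => j k; rewrite [k]ord1 [RHS]mxE.
have -> : (M *m adjmx f) j 0 = ((delta_mx 0 j : 'rV_n) *m M *m adjmx f) 0 0.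
  by rewrite -mulmxA -rowE [RHS]mxE.
move: (delta_mx 0 j) => g.
set a := (g *m M *m adjmx f) 0 0; set b := (g *m M *m adjmx g) 0 0.
have b_ge0 : 0 <= b by apply: psdM.
(* The form at (b + 1) f - a^* g equals - |a|^2 (b + 2). *)
have := psdM ((b + 1) *: f - a^* *: g).
rewrite adjmx_form formDl !formDr !formNl !formNr !formZl !formZr -!adjmx_form.
rewrite qf0 (hermitian_formC _ _ hermM) -/a -/b rmorphD /= conjCK conjC1.
rewrite (geC0_conj b_ge0).
rewrite [X in 0 <= X](_ : _ = - (a * a^* * (b + 2))); last by ring.
rewrite oppr_ge0 pmulr_lle0 ?ltr_wpDl // => aa_le0.
by apply/eqP; rewrite -mul_conjC_eq0 eq_le aa_le0 mul_conjC_ge0.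
Qed.

Lemma psdmx_mul_adj_eq0 k n (M : 'M[C]_n) (G : 'M[C]_(k, n)) : psdmx M ->
  G *m M *m adjmx G = 0 -> G *m M = 0.
Proof.
move=> psdM GMG0; apply/row_matrixP => i; rewrite row_mul row0.
apply: psdmx_form_eq0 => //.
have row_adj : adjmx (row i G) = col i (adjmx G) by apply/matrixP => x y; rewrite !mxE.
by rewrite row_adj colE mulmxA -colE -!row_mul GMG0 !mxE.
Qed.

Lemma mxrank_psd_sandwich k n (M : 'M[C]_n) (F : 'M[C]_(k, n)) : psdmx M ->
  \rank (F *m M *m adjmx F) = \rank (F *m M).
Proof.
move=> psdM; apply/eqP; rewrite eqn_leq mxrankM_maxl /=.
set K := kermx (F *m M *m adjmx F).
have KFM0 : K *m F *m M = 0.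
  apply: psdmx_mul_adj_eq0 => //.
  by rewrite adjmxM !mulmxA -(mulmxA K F) -(mulmxA K) mulmx_ker mul0mx.
have : (K <= kermx (F *m M))%MS by rewrite sub_kermx mulmxA KFM0.
move/mxrankS; rewrite !mxrank_ker.
by have := rank_leq_row (F *m M); lia.
Qed.

Lemma orth_proj_rank1 n (P : 'M[C]_n) :
  orth_proj P -> \rank P = 1%N -> exists x : 'rV[C]_n, P = adjmx x *m x.
Proof.
move=> [hermP idemP] /mxrank1_factor [u [v defP]].
set s := (v *m adjmx v) 0 0.
have s_ge0 : 0 <= s by rewrite /s mxE sumr_ge0 // => j _; rewrite adjmxE mul_conjC_ge0.
exists (sqrtC s *: adjmx u).
rewrite adjmxZ adjmxK -scalemxAl -scalemxAr scalerA.
rewrite (geC0_conj (_ : 0 <= sqrtC s)) ?sqrtC_ge0 // -expr2 sqrtCK.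
(* P = P P^* = u (v v^* ) u^* = s u u^*. *)
rewrite -{1}idemP -{2}hermP defP adjmxM !mulmxA -(mulmxA u).
by rewrite [v *m _]mx11_scalar -/s mul_mx_scalar scalemxAl.
Qed.

End PositiveSemidefinite.

Section PartialTrace.
Variables (C : numClosedFieldType) (d : nat).
Local Notation I := (1%:M : 'M[C]_d).

Lemma sum_mxtens_index m n (F : 'I_(m * n) -> C) :
  \sum_(j < m * n) F j = \sum_(i < m) \sum_(k < n) F (mxtens_index (i, k)).
Proof.
rewrite pair_big (reindex (@mxtens_index m n)) /=; first by apply: eq_bigr => -[].
by exists (@mxtens_unindex m n) => p _; rewrite (mxtens_indexK, mxtens_unindexK).
Qed.

Lemma tensmx1_mulmxE m k n (B : 'M[C]_(m, k)) (N : 'M[C]_(k * d, n)) i l j :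
  ((B *t I) *m N) (mxtens_index (i, l)) j = \sum_a B i a * N (mxtens_index (a, l)) j.
Proof.
rewrite mxE sum_mxtens_index; apply: eq_bigr => a _.
rewrite (bigD1 l) //= big1 ?addr0 => [|b nbl]; rewrite tensmxE mxE.
  by rewrite eqxx mulr1.
by rewrite eq_sym (negbTE nbl) mulr0 mul0r.
Qed.

Lemma mulmx_tensmx1E m k n (B : 'M[C]_(m, k)) (N : 'M[C]_(n, m * d)) j a l :
  (N *m (B *t I)) j (mxtens_index (a, l)) = \sum_i N j (mxtens_index (i, l)) * B i a.
Proof.
rewrite mxE sum_mxtens_index; apply: eq_bigr => i _.
rewrite (bigD1 l) //= big1 ?addr0 => [|b nbl]; rewrite tensmxE mxE.
  by rewrite eqxx mulr1.
by rewrite (negbTE nbl) mulr0 mulr0.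
Qed.

Lemma ptraceA_tensmx1_mulC m k (B : 'M[C]_(m, k)) (N : 'M[C]_(k * d, m * d)) :
  ptraceA ((B *t I) *m N) = ptraceA (N *m (B *t I)).
Proof.
apply/matrixP => l l'; rewrite !mxE.
under eq_bigr => i _ do rewrite tensmx1_mulmxE.
under [RHS]eq_bigr => a _ do rewrite mulmx_tensmx1E.
by rewrite exchange_big; apply: eq_bigr => a _; apply: eq_bigr => i _; rewrite mulrC.
Qed.

Lemma ptraceA1 (N : 'M[C]_(1 * d)) : ptraceA N = castmx (mul1n d, mul1n d) N.
Proof.
apply/matrixP => l l'; rewrite castmxE mxE big_ord1.
by congr (N _ _); apply: val_inj.
Qed.

Lemma ptraceA_rank1_proj m (x : 'rV[C]_m) (M : 'M[C]_(m * d)) :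
  ptraceA (((adjmx x *m x) *t I) *m M)
  = castmx (mul1n d, mul1n d) ((x *t I) *m M *m adjmx (x *t I)).
Proof.
have adj_xI : adjmx (x *t I) = adjmx x *t I by rewrite adjmx_tens adjmx1.
rewrite -[I in _ *t I]mul1mx -tensmx_mul -[X in ptraceA X]mulmxA.
by rewrite ptraceA_tensmx1_mulC ptraceA1 adj_xI.
Qed.

Lemma tensmxDl m n (A B : 'M[C]_(m, n)) : (A + B) *t I = A *t I + B *t I.
Proof. by apply/matrixP => i j; rewrite !mxE mulrDl. Qed.

Lemma tensmx11 m : (1%:M : 'M[C]_m) *t I = 1%:M.
Proof.
apply/matrixP => p q.
case: (mxtens_indexP p) => i k; case: (mxtens_indexP q) => i' k'.
rewrite tensmxE !mxE (inj_eq (can_inj (@mxtens_indexK m d))) xpair_eqE.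
by rewrite -natrM mulnb.
Qed.

Lemma mxrank_le_resolution_tens1 m n (x0 x1 : 'rV[C]_m) (M : 'M[C]_(m * d, n)) :
  adjmx x0 *m x0 + adjmx x1 *m x1 = 1%:M ->
  (\rank M <= \rank ((x0 *t I) *m M) + \rank ((x1 *t I) *m M))%N.
Proof.
move=> resolution.
have {}resolution : adjmx (x0 *t I) *m (x0 *t I) + adjmx (x1 *t I) *m (x1 *t I) = 1%:M.
  by rewrite !adjmx_tens adjmx1 !tensmx_mul mulmx1 -tensmxDl resolution tensmx11.
rewrite -[M in (\rank M <= _)%N]mul1mx -resolution mulmxDl -!mulmxA.
by rewrite (leq_trans (mxrank_add _ _)) // leq_add // mxrankM_maxr.
Qed.

Lemma mxrank_tens1_mul_le m n (x : 'rV[C]_m) (M : 'M[C]_(m * d, n)) :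
  (\rank ((x *t I) *m M) <= minn d (\rank M))%N.
Proof. by rewrite leq_min mxrankM_maxr andbT -[leqRHS]mul1n rank_leq_row. Qed.

End PartialTrace.

Lemma mxrank_cond_state (C : numClosedFieldType) d (x : 'rV[C]_2)
    (rho : 'M[C]_(2 * d)) :
  psdmx rho ->
  \rank (cond_state (adjmx x *m x) rho) = \rank ((x *t (1%:M : 'M_d)) *m rho).
Proof.
move=> psd_rho.
by rewrite /cond_state ptraceA_rank1_proj mxrank_castmx mxrank_psd_sandwich.
Qed.

Theorem lemma4 (C : numClosedFieldType) (d : nat)
  (rho : 'M[C]_(2 * d)) (P0 P1 : 'M[C]_2) :
  is_state rho ->
  orth_proj P0 -> orth_proj P1 ->
  \rank P0 = 1%N -> \rank P1 = 1%N -> P0 + P1 = 1%:M ->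
  [/\ (\rank (cond_state P0 rho) = 1%N -> \rank (cond_state P1 rho) = 1%N ->
         \rank rho <> 3%N),
      (3 <= d)%N -> \rank rho = 3%N -> \rank (cond_state P0 rho) = 0%N ->
         \rank (cond_state P1 rho) = 3%N
    & d = 2%N -> \rank rho = 3%N ->
         \rank (cond_state P0 rho) <> 0%N /\ \rank (cond_state P1 rho) <> 0%N].
Proof.
move=> [psd_rho _] projP0 projP1 /(orth_proj_rank1 projP0) [x0 ->].
move=> /(orth_proj_rank1 projP1) [x1 ->] /(mxrank_le_resolution_tens1 rho).
rewrite !mxrank_cond_state //.
have := mxrank_tens1_mul_le x0 rho; have := mxrank_tens1_mul_le x1 rho.
set r0 := \rank (x0 *t _ *m rho); set r1 := \rank (x1 *t _ *m rho).
move: r0 r1 (\rank rho) => r0 r1 r.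
by split; lia.
Qed.
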